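(* For every $l\ge1$, the Christoffel–Darboux kernel $K^{[l]}(x,y):=\sum_{k=0}^{l-1}Q^{(k)}(y)\bar Q^{(k)}(x)$ satisfies $$K^{[l]}(x,y)=\big(\xi_2^{[l]}(x)\big)^\top(g^{[l]})^{-1}\xi_1^{[l]}(y).$$
   Context: Setting: $\mu$ finite Borel measure on an interval, weights $w_{1,a}$ ($a\le p_1$), $w_{2,b}$ ($b\le p_2$), compositions $\vec n_\ell\in\mathbb N^{p_\ell}$; each $i\in\mathbb Z_+$ is uniquely $i=q|\vec n_\ell|+n_{\ell,1}+\dots+n_{\ell,a-1}+r$ ($0\le r<n_{\ell,a}$), $a_\ell(i)=a$, $k_\ell(i)=qn_{\ell,a}+r$. $\xi_\ell(x)$ is the semi-infinite vector with $i$-th entry $w_{\ell,a_\ell(i)}(x)x^{k_\ell(i)}$, $\xi_\ell^{[l]}$ its first $l$ entries. Moment matrix $g=\int\xi_1\xi_2^\top d\mu$, $g^{[l]}=(g_{i,j})_{0\le i,j<l}$, with Gauss–Borel factorization $g=S^{-1}\bar S$ ($S$ unit lower triangular, $\bar S$ upper triangular invertible). Linear forms $Q=S\xi_1$, $\bar Q=(\bar S^{-1})^\top\xi_2$ with entries $Q^{(k)},\bar Q^{(k)}$. *)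

From HB Require Import structures.
From mathcomp Require Import all_boot all_order all_algebra.
From mathcomp Require Import all_classical all_reals all_analysis.
Set Implicit Arguments. Unset Strict Implicit. Unset Printing Implicit Defensive.
Import Order.TTheory GRing.Theory Num.Theory.
Local Open Scope ring_scope.

(* Indices are 0-based: weights w a for a < p (paper: a = 1..p),
   composition n : nat -> nat, only n 0, ..., n (p-1) matter. *)

Definition comp_total (p : nat) (n : nat -> nat) : nat := (\sum_(b < p) n b)%N.
Definition comp_psum (n : nat -> nat) (a : nat) : nat := (\sum_(b < a) n b)%N.

(* i = q|n| + n_0 + ... + n_{a-1} + r with 0 <= r < n_a :
   a_of gives a, k_of gives q n_a + r. *)
Definition a_of (p : nat) (n : nat -> nat) (i : nat) : nat :=
  find (fun a => (i %% comp_total p n < comp_psum n a.+1)%N) (iota 0 p).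
Definition k_of (p : nat) (n : nat -> nat) (i : nat) : nat :=
  (i %/ comp_total p n * n (a_of p n i) + (i %% comp_total p n - comp_psum n (a_of p n i)))%N.

Definition xi {R : ringType} (p : nat) (n : nat -> nat) (w : nat -> R -> R)
  (x : R) (i : nat) : R := w (a_of p n i) x * x ^+ k_of p n i.

Definition moment {R : realType} (mu : set R -> \bar R) (D : set R)
  (xi1 xi2 : R -> nat -> R) (i j : nat) : R :=
  fine (\int[mu]_(x in D) (xi1 x i * xi2 x j)%:E)%E.

(* products of semi-infinite matrices (nat -> nat -> R) which are finite sums
   by triangularity: lmul when the left factor is lower triangular,
   umul when the right factor is upper triangular *)
Definition lmul {R : ringType} (A B : nat -> nat -> R) (i j : nat) : R :=
  \sum_(k < i.+1) A i k * B k j.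
Definition umul {R : ringType} (A B : nat -> nat -> R) (i j : nat) : R :=
  \sum_(k < j.+1) A i k * B k j.

Definition lower_tri {R : ringType} (A : nat -> nat -> R) : Prop :=
  forall i j : nat, (i < j)%N -> A i j = 0.
Definition upper_tri {R : ringType} (A : nat -> nat -> R) : Prop :=
  forall i j : nat, (j < i)%N -> A i j = 0.
Definition is_id {R : ringType} (A : nat -> nat -> R) : Prop :=
  forall i j : nat, A i j = (i == j)%:R.

(* Q = S xi1 (S lower triangular), Qbar = (Sbar^{-1})^T xi2 (Sbar^{-1} upper triangular) *)
Definition Qf {R : ringType} (S : nat -> nat -> R) (xi1 : R -> nat -> R) (k : nat) (y : R) : R :=
  \sum_(j < k.+1) S k j * xi1 y j.
Definition Qbarf {R : ringType} (Sbarinv : nat -> nat -> R) (xi2 : R -> nat -> R) (k : nat) (x : R) : R :=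
  \sum_(j < k.+1) Sbarinv j k * xi2 x j.

Definition CDkernel {R : ringType} (S Sbarinv : nat -> nat -> R) (xi1 xi2 : R -> nat -> R)
  (l : nat) (x y : R) : R :=
  \sum_(k < l) Qf S xi1 k y * Qbarf Sbarinv xi2 k x.

From HB Require Import structures.
From mathcomp Require Import all_boot all_order all_algebra.
From mathcomp Require Import all_classical all_reals all_analysis.
Import Order.TTheory GRing.Theory Num.Theory.
Local Open Scope ring_scope.

(* Truncating the Gauss--Borel factorization g = S^-1 Sbar to its leading
   l x l block commutes with products because the factors are triangular, so
   (g^[l])^-1 = Sbar^-1^[l] S^[l].  The kernel is the bilinear form of this
   matrix evaluated at xi_2(x) and xi_1(y), by the definitions of Q and Qbar. *)

Definition leading_mx {R : ringType} (m n : nat) (A : nat -> nat -> R) : 'M[R]_(m, n) :=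
  \matrix_(i < m, j < n) A i j.

Lemma big_ord_trunc (R : ringType) (f : nat -> R) (i l : nat) : (i < l)%N ->
  (forall k, (i < k)%N -> f k = 0) -> \sum_(k < l) f k = \sum_(k < i.+1) f k.
Proof.
move=> il f0; rewrite -!(big_mkord xpredT f) (big_cat_nat _ (n := i.+1)) //=.
rewrite [X in _ + X]big1_seq ?addr0 // => k /andP[_].
by rewrite mem_index_iota => /andP[/f0].
Qed.

Section LeadingBlocks.
Variable R : ringType.
Implicit Types A B : nat -> nat -> R.

Lemma leading_mx_lmul A B l n : lower_tri A ->
  leading_mx l n (lmul A B) = leading_mx l l A *m leading_mx l n B.
Proof.
move=> lowA; apply/matrixP => i j; rewrite !mxE /lmul.
rewrite -(@big_ord_trunc _ (fun k => A i k * B k j) _ _ (ltn_ord i)).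
  by apply: eq_bigr => k _; rewrite !mxE.
by move=> k ik; rewrite lowA // mul0r.
Qed.

Lemma leading_mx_umul A B m l : upper_tri B ->
  leading_mx m l (umul A B) = leading_mx m l A *m leading_mx l l B.
Proof.
move=> upB; apply/matrixP => i j; rewrite !mxE /umul.
rewrite -(@big_ord_trunc _ (fun k => A i k * B k j) _ _ (ltn_ord j)).
  by apply: eq_bigr => k _; rewrite !mxE.
by move=> k jk; rewrite upB // mulr0.
Qed.

Lemma leading_mx_id A l : is_id A -> leading_mx l l A = 1%:M.
Proof. by move=> idA; apply/matrixP => i j; rewrite !mxE idA. Qed.

End LeadingBlocks.

Lemma invmx_mul_inverses (R : comUnitRingType) n (A B C D : 'M[R]_n) :
  B *m C = 1%:M -> A *m D = 1%:M -> invmx (A *m B) = C *m D.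
Proof.
move=> BC AD.
have ABCD : A *m B *m (C *m D) = 1%:M by rewrite mulmxA -(mulmxA A) BC mulmx1.
have [ABu _] := mulmx1_unit ABCD.
by rewrite -[RHS](mulKmx ABu) ABCD mulmx1.
Qed.

Lemma CDkernel_leading_mx (R : comRingType) (S Sbarinv : nat -> nat -> R)
    (xi1 xi2 : R -> nat -> R) l x y :
  lower_tri S -> upper_tri Sbarinv ->
  CDkernel S Sbarinv xi1 xi2 l x y =
  ((\row_(i < l) xi2 x i) *m (leading_mx l l Sbarinv *m leading_mx l l S)
     *m (\col_(j < l) xi1 y j)) ord0 ord0.
Proof.
move=> lowS upSbi; rewrite mulmxA -[_ *m _ *m _]mulmxA mxE /CDkernel.
apply: eq_bigr => k _; rewrite mulrC !mxE; congr (_ * _).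
- rewrite /Qbarf -(@big_ord_trunc _ (fun j => Sbarinv j k * xi2 x j) _ _ (ltn_ord k)).
    by apply: eq_bigr => j _; rewrite !mxE mulrC.
  by move=> j kj; rewrite upSbi // mul0r.
- rewrite /Qf -(@big_ord_trunc _ (fun j => S k j * xi1 y j) _ _ (ltn_ord k)).
    by apply: eq_bigr => j _; rewrite !mxE.
  by move=> j kj; rewrite lowS // mul0r.
Qed.

Theorem corollary2p2 (R : realType) (mu : {finite_measure set R -> \bar R})
  (I : interval R)
  (p1 p2 : nat) (n1 n2 : nat -> nat) (w1 w2 : nat -> R -> R)
  (S Sinv Sbar Sbarinv : nat -> nat -> R) :
  (0 < p1)%N -> (0 < p2)%N ->
  (forall a, (a < p1)%N -> (0 < n1 a)%N) ->
  (forall a, (a < p2)%N -> (0 < n2 a)%N) ->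
  (forall i j : nat, mu.-integrable [set` I]
      (fun x => (xi p1 n1 w1 x i * xi p2 n2 w2 x j)%:E)) ->
  lower_tri S -> (forall i, S i i = 1) ->
  lower_tri Sinv -> is_id (lmul S Sinv) -> is_id (lmul Sinv S) ->
  upper_tri Sbar -> (forall i, Sbar i i != 0) ->
  upper_tri Sbarinv -> is_id (umul Sbar Sbarinv) -> is_id (umul Sbarinv Sbar) ->
  (forall i j : nat, moment mu [set` I] (xi p1 n1 w1) (xi p2 n2 w2) i j
                     = lmul Sinv Sbar i j) ->
  forall (l : nat), (1 <= l)%N -> forall x y : R,
    CDkernel S Sbarinv (xi p1 n1 w1) (xi p2 n2 w2) l x y =
    ((\row_(i < l) xi p2 n2 w2 x i)
       *m invmx (\matrix_(i < l, j < l) moment mu [set` I] (xi p1 n1 w1) (xi p2 n2 w2) i j)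
       *m (\col_(j < l) xi p1 n1 w1 y j)) ord0 ord0.
Proof.
move=> _ _ _ _ _ lowS _ lowSi _ SiS _ _ upSbi SbSbi _ gauss_borel l _ x y.
have -> : \matrix_(i < l, j < l) moment mu [set` I] (xi p1 n1 w1) (xi p2 n2 w2) i j
          = leading_mx l l Sinv *m leading_mx l l Sbar.
  rewrite -leading_mx_lmul //.
  by apply/matrixP => i j; rewrite !mxE gauss_borel.
rewrite (@invmx_mul_inverses _ _ _ _ (leading_mx l l Sbarinv) (leading_mx l l S)).
- exact: CDkernel_leading_mx.
- by rewrite -leading_mx_umul // leading_mx_id.
- by rewrite -leading_mx_lmul // leading_mx_id.
Qed.
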